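(* Let $K$ be a partition of a metric space $(Y,\rho)$ parametrized by a tree with a reference point $(T,\pi,\phi)$ and satisfying the basic framework with constants $\zeta\in(0,1)$ and $\xi>0$. Then there exist $\xi'>0$ and points $\{y_w\}_{w\in T}$ with $y_w\in K_w$ and $B_\rho(y_w,\xi'\zeta^{[w]})\subset K_w$ for all $w\in T$, such that $\bigcup_{w\in T_n}\{y_w\}\subset\bigcup_{w\in T_m}\{y_w\}$ whenever $n\le m$.
   Context: Trees and partitions: a tree with a reference point $(T,\pi,\phi)$ is a countable set $T$ with a map $\pi:T\to T$ such that $F_\pi=\{w:\pi^n(w)=w$ for some $n\ge1\}$ has at most one element, and for all $w,v$ there are $n,m\ge0$ with $\pi^n(w)=\pi^m(v)$; $\phi\in F_\pi$ if $F_\pi\neq\emptyset$, otherwise $\phi$ is a fixed element. Let $b(w,v)=\min\{n\ge0:\pi^n(w)=\pi^m(v)$ for some $m\ge0\}$, $[w]=b(w,\phi)-b(\phi,w)$, $T_n=\{w:[w]=n\}$ ($n\in\mathbb Z$), and $\acute\pi^{-k}(w)=\pi^{-k}(w)\cap T_{[w]+k}$. A partition of a metric space $(Y,\rho)$ parametrized by $(T,\pi,\phi)$ is a map $w\mapsto K_w\subset Y$ with: each $K_w$ compact, nonempty and not a single point; $\bigcup_{w\in T_0}K_w=Y$; $\bigcup_{v\in\acute\pi^{-1}(w)}K_v=K_w$ for all $w$; and $\bigcap_{k\in\mathbb Z}K_{w_k}$ is a single point whenever $(w_k)_{k\in\mathbb Z}$ satisfies $\pi(w_{k+1})=w_k$.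 Let $E_n=\{(w,v)\in T_n\times T_n:K_w\cap K_v\ne\emptyset,w\ne v\}$ and $l_n$ the graph distance on $(T_n,E_n)$ (possibly $\infty$). $K$ satisfies the basic framework if $\sup_w\#\acute\pi^{-1}(w)<\infty$ and: interiors of distinct $K_w,K_v$ with $[w]=[v]$ are disjoint; there is $\zeta\in(0,1)$ with $\mathrm{diam}_\rho(K_w)\asymp\zeta^{[w]}$; there is $\xi>0$ such that for each $w$ there is $x_w\in K_w$ with $B_\rho(x_w,\xi\zeta^{[w]})\subset K_w$; there is $M_*\in\mathbb N$ with $\rho(x,y)\asymp\zeta^{\Delta_{M_*}(x,y)}$, where $\Delta_m(x,y)=\sup\{n:x\in K_w,y\in K_v,l_n(w,v)\le m$ for some $w,v\in T_n\}$; and $L_*=\sup_w\#\{v:(w,v)\in E_{[w]}\}<\infty$. *)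

From Stdlib Require Import Reals ZArith List ClassicalEpsilon.
Open Scope R_scope.

Definition is_metric {Y : Type} (rho : Y -> Y -> R) : Prop :=
  (forall x y, 0 <= rho x y) /\
  (forall x y, rho x y = 0 <-> x = y) /\
  (forall x y, rho x y = rho y x) /\
  (forall x y z, rho x z <= rho x y + rho y z).

Definition ball {Y : Type} (rho : Y -> Y -> R) (x : Y) (r : R) : Y -> Prop :=
  fun y => rho x y < r.

Definition subset {Y : Type} (A B : Y -> Prop) : Prop := forall y, A y -> B y.

Definition is_open {Y : Type} (rho : Y -> Y -> R) (U : Y -> Prop) : Prop :=
  forall x, U x -> exists r, 0 < r /\ subset (ball rho x r) U.

Definition is_compact {Y : Type} (rho : Y -> Y -> R) (S : Y -> Prop) : Prop :=
  forall (I : Type) (U : I -> Y -> Prop),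
    (forall i, is_open rho (U i)) ->
    (forall x, S x -> exists i, U i x) ->
    exists l : list I, forall x, S x -> exists i, In i l /\ U i x.

Definition interior {Y : Type} (rho : Y -> Y -> R) (S : Y -> Prop) : Y -> Prop :=
  fun x => exists r, 0 < r /\ subset (ball rho x r) S.

Definition is_diam {Y : Type} (rho : Y -> Y -> R) (S : Y -> Prop) (d : R) : Prop :=
  is_lub (fun r => exists x y, S x /\ S y /\ r = rho x y) d.

Definition countable_type (T : Type) : Prop :=
  exists f : T -> nat, forall a b, f a = f b -> a = b.

Definition in_F {T : Type} (pi : T -> T) (w : T) : Prop :=
  exists n : nat, (1 <= n)%nat /\ Nat.iter n pi w = w.

Definition is_tree_ref (T : Type) (pi : T -> T) (phi : T) : Prop :=
  countable_type T /\
  (forall w v, in_F pi w -> in_F pi v -> w = v) /\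
  (forall w v, exists n m : nat, Nat.iter n pi w = Nat.iter m pi v) /\
  ((exists w, in_F pi w) -> in_F pi phi).

Definition meets {T : Type} (pi : T -> T) (w v : T) (n : nat) : Prop :=
  exists m : nat, Nat.iter n pi w = Nat.iter m pi v.

Definition bmin {T : Type} (pi : T -> T) (w v : T) (n : nat) : Prop :=
  meets pi w v n /\ forall k, (k < n)%nat -> ~ meets pi w v k.

Definition bdist {T : Type} (pi : T -> T) (w v : T) : nat :=
  epsilon (inhabits 0%nat) (bmin pi w v).

Definition lev {T : Type} (pi : T -> T) (phi : T) (w : T) : Z :=
  (Z.of_nat (bdist pi w phi) - Z.of_nat (bdist pi phi w))%Z.

Definition child {T : Type} (pi : T -> T) (phi : T) (w v : T) : Prop :=
  pi v = w /\ lev pi phi v = (lev pi phi w + 1)%Z.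

Definition is_partition {Y T : Type} (rho : Y -> Y -> R) (pi : T -> T) (phi : T)
    (K : T -> Y -> Prop) : Prop :=
  (forall w, is_compact rho (K w)) /\
  (forall w, exists x, K w x) /\
  (forall w, exists x y, K w x /\ K w y /\ x <> y) /\
  (forall x : Y, exists w, lev pi phi w = 0%Z /\ K w x) /\
  (forall w x, K w x <-> exists v, child pi phi w v /\ K v x) /\
  (forall s : Z -> T, (forall k, pi (s (k + 1)%Z) = s k) ->
     exists x, (forall k, K (s k) x) /\
               forall y, (forall k, K (s k) y) -> y = x).

Definition edge {Y T : Type} (pi : T -> T) (phi : T) (K : T -> Y -> Prop)
    (n : Z) (w v : T) : Prop :=
  lev pi phi w = n /\ lev pi phi v = n /\ (exists x, K w x /\ K v x) /\ w <> v.

(* reach n k w v : l_n(w,v) <= k (graph distance on (T_n,E_n)) *)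
Fixpoint reach {Y T : Type} (pi : T -> T) (phi : T) (K : T -> Y -> Prop)
    (n : Z) (k : nat) (w v : T) : Prop :=
  match k with
  | O => lev pi phi w = n /\ w = v
  | S k' => reach pi phi K n k' w v \/
            exists u, reach pi phi K n k' w u /\ edge pi phi K n u v
  end.

(* the set whose supremum is Delta_m(x,y) *)
Definition DeltaSet {Y T : Type} (pi : T -> T) (phi : T) (K : T -> Y -> Prop)
    (m : nat) (x y : Y) (n : Z) : Prop :=
  exists w v, lev pi phi w = n /\ lev pi phi v = n /\ K w x /\ K v y /\
              reach pi phi K n m w v.

(* supremum in Z ∪ {+oo}; None stands for +oo *)
Definition Zsup (D : Z -> Prop) (d : option Z) : Prop :=
  match d with
  | None => forall k, exists n, D n /\ (k <= n)%Z
  | Some n => D n /\ forall k, D k -> (k <= n)%Z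
  end.

(* zeta^d with the convention zeta^(+oo) = 0 (0 < zeta < 1) *)
Definition zpow (zeta : R) (d : option Z) : R :=
  match d with None => 0 | Some n => powerRZ zeta n end.

Definition basic_framework {Y T : Type} (rho : Y -> Y -> R) (pi : T -> T) (phi : T)
    (K : T -> Y -> Prop) (zeta xi : R) : Prop :=
  (exists N : nat, forall w, exists l : list T, (length l <= N)%nat /\
       forall v, child pi phi w v -> In v l) /\
  (forall w v x, lev pi phi w = lev pi phi v -> w <> v ->
       ~ (interior rho (K w) x /\ interior rho (K v) x)) /\
  0 < zeta < 1 /\
  (exists c1 c2, 0 < c1 /\ 0 < c2 /\ forall w, exists d, is_diam rho (K w) d /\
       c1 * powerRZ zeta (lev pi phi w) <= d <= c2 * powerRZ zeta (lev pi phi w)) /\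
  0 < xi /\
  (forall w, exists x, K w x /\ subset (ball rho x (xi * powerRZ zeta (lev pi phi w))) (K w)) /\
  (exists M : nat, exists c1 c2, 0 < c1 /\ 0 < c2 /\ forall x y,
       exists d, Zsup (DeltaSet pi phi K M x y) d /\
       c1 * zpow zeta d <= rho x y <= c2 * zpow zeta d) /\
  (exists L : nat, forall w, exists l : list T, (length l <= L)%nat /\
       forall v, edge pi phi K (lev pi phi w) w v -> In v l).

(* Fix inner points [c w] with [B(c w, xi zeta^[w]) ⊆ K w] and choose [k] with
   [diam K_v <= xi/2 zeta^([v]-k)] for all [v].  Mark the vertices whose level is a
   multiple of [k], and choose for every [w] a child [d w] such that, along the [d]-path
   from a marked vertex [b], the next [k] generations all still contain [c b].  Going up
   by [pi] and down by [d] from [w] gives a bi-infinite path, whose intersection point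
   is [y w]; it does not change along [d], which gives the nesting of the point sets.
   Below the marked vertex [b] at most [k] levels under [w], the point [y w] lies within
   [xi/2 zeta^[b]] of [c b], so a ball of radius [xi/2 zeta^k zeta^[w]] around [y w]
   stays inside [B(c b, xi zeta^[b]) ⊆ K b ⊆ K w]. *)
From Stdlib Require Import Reals ZArith Lia Lra ClassicalEpsilon.
Open Scope R_scope.

Set Implicit Arguments.

Section Descendants.

Variables (T : Type) (pi : T -> T) (phi : T).

Local Notation lev := (lev pi phi).
Local Notation child := (child pi phi).

Fixpoint descendant (j : nat) (w u : T) : Prop :=
  match j with
  | O => w = u
  | S j' => exists v, descendant j' w v /\ child v u
  end.

Lemma descendant_lev j w u : descendant j w u -> lev u = (lev w + Z.of_nat j)%Z.
Proof.
  revert u; induction j as [|j IH]; simpl; intros u Hwu.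
  - subst; lia.
  - destruct Hwu as [v [Hwv [_ Hlev]]]. apply IH in Hwv. lia.
Qed.

Lemma descendant_ancestor_unique j b b' w :
  descendant j b w -> descendant j b' w -> b = b'.
Proof.
  revert w; induction j as [|j IH]; simpl; intros w Hb Hb'.
  - congruence.
  - destruct Hb as [v [Hbv [Hv _]]], Hb' as [v' [Hbv' [Hv' _]]].
    subst v v'. exact (IH _ Hbv Hbv').
Qed.

Definition on_grid (k : nat) (b : T) : Prop := exists q, lev b = (Z.of_nat k * q)%Z.

(* Levels decide the distance, and [pi] the ancestor at a given distance. *)
Lemma grid_ancestor_unique k b b' j j' w :
  (0 < k)%nat -> on_grid k b -> on_grid k b' ->
  descendant j b w -> descendant j' b' w -> (j < k)%nat -> (j' < k)%nat -> b = b'.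
Proof.
  intros Hk [q Hq] [q' Hq'] Hb Hb' Hj Hj'.
  pose proof (descendant_lev _ _ _ Hb). pose proof (descendant_lev _ _ _ Hb').
  assert (j = j') by (assert (q = q') by nia; subst; nia). subst j'.
  eapply descendant_ancestor_unique; eauto.
Qed.

Section ChildMap.

Variable d : T -> T.
Hypothesis d_child : forall w, child w (d w).

Lemma iter_descendant n w : descendant n w (Nat.iter n d w).
Proof.
  revert w; induction n as [|n IH]; intro w; simpl; [reflexivity|].
  exists (Nat.iter n d w); split; [apply IH | apply d_child].
Qed.

Lemma grid_point_below k w :
  (0 < k)%nat -> exists i, (i < k)%nat /\ on_grid k (Nat.iter i d w).
Proof.
  intro Hk.
  set (r := ((- lev w) mod Z.of_nat k)%Z).
  assert (Hr : (0 <= r < Z.of_nat k)%Z) by (apply Z.mod_pos_bound; lia).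
  exists (Z.to_nat r); split; [lia|].
  exists (- ((- lev w) / Z.of_nat k))%Z.
  rewrite (descendant_lev _ _ _ (iter_descendant _ _)), Z2Nat.id by lia.
  pose proof (Z.div_mod (- lev w) (Z.of_nat k) ltac:(lia)). unfold r. lia.
Qed.

Definition bipath (w : T) (z : Z) : T :=
  if Z.leb 0 z then Nat.iter (Z.to_nat z) d w else Nat.iter (Z.to_nat (- z)) pi w.

Lemma bipath_pi w z : pi (bipath w (z + 1)) = bipath w z.
Proof.
  unfold bipath. destruct (Z.leb_spec 0 (z + 1)), (Z.leb_spec 0 z); try lia.
  - replace (Z.to_nat (z + 1)) with (S (Z.to_nat z)) by lia. apply d_child.
  - replace z with (-1)%Z by lia. reflexivity.
  - replace (Z.to_nat (- z)) with (S (Z.to_nat (- (z + 1)))) by lia. reflexivity.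
Qed.

Lemma bipath_child w z : bipath (d w) z = bipath w (z + 1).
Proof.
  unfold bipath. destruct (Z.leb_spec 0 (z + 1)), (Z.leb_spec 0 z); try lia.
  - replace (Z.to_nat (z + 1)) with (S (Z.to_nat z)) by lia.
    rewrite Nat.iter_succ_r. reflexivity.
  - replace z with (-1)%Z by lia. apply d_child.
  - replace (Z.to_nat (- z)) with (S (Z.to_nat (- (z + 1)))) by lia.
    rewrite Nat.iter_succ_r, (proj1 (d_child w)). reflexivity.
Qed.

Lemma bipath_nat w n : bipath w (Z.of_nat n) = Nat.iter n d w.
Proof.
  unfold bipath. destruct (Z.leb_spec 0 (Z.of_nat n)); [|lia].
  rewrite Nat2Z.id. reflexivity.
Qed.

End ChildMap.

End Descendants.

Section Cells.

Variables (Y T : Type) (pi : T -> T) (phi : T) (K : T -> Y -> Prop).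

Local Notation lev := (lev pi phi).
Local Notation child := (child pi phi).
Local Notation descendant := (descendant pi phi).
Local Notation on_grid := (on_grid pi phi).

Hypothesis K_children : forall w x, K w x <-> exists v, child w v /\ K v x.

Lemma descendant_sub j w u x : descendant j w u -> K u x -> K w x.
Proof.
  revert u; induction j as [|j IH]; simpl; intros u Hwu Hx.
  - subst; exact Hx.
  - destruct Hwu as [v [Hwv Hvu]]. apply (IH v Hwv), K_children. eauto.
Qed.

Definition guided_child (k : nat) (c : T -> Y) (w u : T) : Prop :=
  child w u /\
  forall b j, (j < k)%nat -> on_grid k b -> descendant j b w -> K w (c b) -> K u (c b).

Lemma guided_child_exists k c w :
  (exists x, K w x) -> (0 < k)%nat -> exists u, guided_child k c w u.
Proof.
  intros [x0 Hx0] Hk.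
  destruct (classic (exists b j, (j < k)%nat /\ on_grid k b /\
                       descendant j b w /\ K w (c b)))
    as [[b0 [j0 [Hj0 [Hb0 [Hdesc0 Hc0]]]]] | Hnone].
  - destruct (proj1 (K_children w (c b0)) Hc0) as [u [Hu Hcu]].
    exists u; split; [exact Hu|]. intros b j Hj Hb Hdesc _.
    replace b with b0 by (eapply grid_ancestor_unique; eauto). exact Hcu.
  - destruct (proj1 (K_children w x0) Hx0) as [u [Hu _]].
    exists u; split; [exact Hu|]. intros b j Hj Hb Hdesc Hc.
    exfalso; apply Hnone; eauto 10.
Qed.

Section GuidedPath.

Variables (k : nat) (c : T -> Y) (d : T -> T).
Hypothesis d_guided : forall w, guided_child k c w (d w).

Let d_child w : child w (d w) := proj1 (d_guided w).

Lemma guided_path_keeps b j :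
  on_grid k b -> K b (c b) -> (j <= k)%nat -> K (Nat.iter j d b) (c b).
Proof.
  intros Hb Hc. induction j as [|j IH]; intro Hj; [exact Hc|].
  apply (proj2 (d_guided _) b j); [lia | exact Hb | | apply IH; lia].
  apply iter_descendant, d_child.
Qed.

End GuidedPath.

Lemma path_point_exists (d : T -> T) :
  (forall w, child w (d w)) ->
  (forall s : Z -> T, (forall z, pi (s (z + 1)%Z) = s z) ->
     exists x, (forall z, K (s z) x) /\ forall y, (forall z, K (s z) y) -> y = x) ->
  exists y : T -> Y,
    (forall w n, K (Nat.iter n d w) (y w)) /\ (forall w n, y (Nat.iter n d w) = y w).
Proof.
  intros d_child Hpoint.
  destruct (choice (fun w x => (forall z, K (bipath pi d w z) x) /\
                      forall x', (forall z, K (bipath pi d w z) x') -> x' = x))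
    as [y Hy].
  { intro w. apply Hpoint. intro z. apply (bipath_pi d d_child). }
  assert (Hstep : forall w, y (d w) = y w).
  { intro w. apply (proj2 (Hy w)). intro z.
    replace z with (z - 1 + 1)%Z by lia.
    rewrite <- (bipath_child d d_child). apply (proj1 (Hy (d w))). }
  exists y; split.
  - intros w n. rewrite <- (bipath_nat pi). apply (proj1 (Hy w)).
  - intros w n. induction n as [|n IH]; simpl; [reflexivity|].
    rewrite Hstep. exact IH.
Qed.

End Cells.

Lemma ball_sub_ball {Y : Type} (rho : Y -> Y -> R) (p q : Y) (r s : R) :
  (forall x y z, rho x z <= rho x y + rho y z) ->
  rho p q + s <= r -> subset (ball rho q s) (ball rho p r).
Proof.
  intros Htri Hs z Hz. unfold ball in *. pose proof (Htri p q z). lra.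
Qed.

Lemma diam_ub {Y : Type} (rho : Y -> Y -> R) (S : Y -> Prop) (dd : R) x y :
  is_diam rho S dd -> S x -> S y -> rho x y <= dd.
Proof. intros [Hub _] Hx Hy. apply Hub. eauto. Qed.

Lemma exists_pow_lt (zeta e : R) :
  0 <= zeta < 1 -> 0 < e -> exists k, (0 < k)%nat /\ zeta ^ k < e.
Proof.
  intros Hz He.
  destruct (pow_lt_1_zero zeta ltac:(rewrite Rabs_pos_eq; lra) e He) as [N HN].
  exists (S N); split; [lia|].
  specialize (HN (S N) ltac:(lia)).
  rewrite Rabs_pos_eq in HN by (apply pow_le; lra). exact HN.
Qed.

Lemma powerRZ_shift_le (zeta : R) (L : Z) (i k : nat) :
  0 < zeta <= 1 -> (i <= k)%nat ->
  zeta ^ k * powerRZ zeta L <= powerRZ zeta (L + Z.of_nat i).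
Proof.
  intros Hz Hik.
  rewrite powerRZ_add, <- pow_powerRZ, Rmult_comm by lra.
  apply Rmult_le_compat_l; [apply powerRZ_le; lra|].
  replace k with (i + (k - i))%nat by lia. rewrite pow_add.
  assert (0 < zeta ^ i) by (apply pow_lt; lra).
  assert (zeta ^ (k - i) <= 1) by (rewrite <- (pow1 (k - i)); apply pow_incr; lra).
  nra.
Qed.

Section InnerBalls.

Variables (Y T : Type) (rho : Y -> Y -> R) (pi : T -> T) (phi : T) (K : T -> Y -> Prop).
Variables (zeta xi c2 : R) (k : nat) (c : T -> Y) (d : T -> T) (y : T -> Y).

Local Notation lev := (lev pi phi).

Hypothesis rho_triangle : forall x y z, rho x z <= rho x y + rho y z.
Hypothesis zeta_range : 0 < zeta < 1.
Hypothesis xi_pos : 0 < xi.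
Hypothesis K_children : forall w x, K w x <-> exists v, child pi phi w v /\ K v x.
Hypothesis diam_K : forall w, exists dd, is_diam rho (K w) dd /\
                                         dd <= c2 * powerRZ zeta (lev w).
Hypothesis c_inner : forall w, K w (c w) /\
                                subset (ball rho (c w) (xi * powerRZ zeta (lev w))) (K w).
Hypothesis k_pos : (0 < k)%nat.
Hypothesis k_small : c2 * zeta ^ k < xi / 2.
Hypothesis d_guided : forall w, guided_child pi phi K k c w (d w).
Hypothesis y_on_path : forall w n, K (Nat.iter n d w) (y w).

Lemma inner_ball_path_point w :
  subset (ball rho (y w) (xi / 2 * zeta ^ k * powerRZ zeta (lev w))) (K w).
Proof.
  assert (d_child : forall v, child pi phi v (d v)) by (intro; apply d_guided).
  destruct (grid_point_below d d_child w k_pos) as [i [Hik Hb]].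
  set (b := Nat.iter i d w) in Hb.
  assert (Hwb : descendant pi phi i w b) by apply (iter_descendant d d_child).
  assert (Hlev_b := descendant_lev _ _ _ _ _ Hwb).
  set (v := Nat.iter k d b).
  assert (Hlev_v : lev v = (lev b + Z.of_nat k)%Z)
    by apply (descendant_lev pi phi), (iter_descendant d d_child).
  assert (Hcv : K v (c b))
    by (apply (guided_path_keeps d d_guided); [exact Hb | apply (proj1 (c_inner b)) | lia]).
  assert (Hyv : K v (y w))
    by (unfold v, b; rewrite <- Nat.iter_add; apply y_on_path).
  destruct (diam_K v) as [dd [Hdiam Hdd]].
  assert (Hclose : rho (c b) (y w) < xi / 2 * powerRZ zeta (lev b)).
  { pose proof (diam_ub _ _ Hdiam Hcv Hyv).
    rewrite Hlev_v, powerRZ_add, <- pow_powerRZ in Hdd by lra.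
    assert (0 < powerRZ zeta (lev b)) by (apply powerRZ_lt; lra).
    nra. }
  assert (Hradius : xi / 2 * zeta ^ k * powerRZ zeta (lev w)
                    <= xi / 2 * powerRZ zeta (lev b)).
  { rewrite Rmult_assoc, Hlev_b.
    apply Rmult_le_compat_l; [lra | apply powerRZ_shift_le; lra || lia]. }
  intros z Hz. apply (descendant_sub K K_children i w b); [exact Hwb|].
  apply (proj2 (c_inner b)).
  refine (ball_sub_ball (c b) rho_triangle _ Hz). lra.
Qed.

End InnerBalls.

Unset Implicit Arguments.

Theorem mainTheorem14 (Y T : Type) (rho : Y -> Y -> R) (pi : T -> T) (phi : T)
    (K : T -> Y -> Prop) (zeta xi : R) :
  is_metric rho ->
  is_tree_ref T pi phi ->
  is_partition rho pi phi K ->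
  basic_framework rho pi phi K zeta xi ->
  exists xi' : R, 0 < xi' /\
  exists y : T -> Y,
    (forall w, K w (y w) /\
       subset (ball rho (y w) (xi' * powerRZ zeta (lev pi phi w))) (K w)) /\
    (forall (n m : Z) (w : T), (n <= m)%Z -> lev pi phi w = n ->
       exists w', lev pi phi w' = m /\ y w' = y w).
Proof.
  intros [_ [_ [_ Htri]]] _ [_ [Hne [_ [_ [Hchildren Hpoint]]]]]
         [_ [_ [Hz [[c1 [c2 [_ [Hc2 Hdiam]]]] [Hxi [Hinner _]]]]]].
  destruct (choice _ Hinner) as [c Hc].
  destruct (@exists_pow_lt zeta (xi / (2 * c2)) ltac:(lra) ltac:(apply Rdiv_lt_0_compat; lra))
    as [k [Hk Hzk]].
  assert (Hk_small : c2 * zeta ^ k < xi / 2).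
  { apply (Rmult_lt_compat_l c2) in Hzk; [|lra].
    replace (c2 * (xi / (2 * c2))) with (xi / 2) in Hzk by (field; lra). exact Hzk. }
  destruct (choice (guided_child pi phi K k c))
    as [d Hd]; [intro w; apply guided_child_exists; auto|].
  destruct (path_point_exists K d (fun w => proj1 (Hd w)) Hpoint)
    as [y [Hy_on Hy_iter]].
  exists (xi / 2 * zeta ^ k); split; [apply Rmult_lt_0_compat; [lra | apply pow_lt; lra]|].
  exists y; split.
  - intro w; split; [exact (Hy_on w O)|].
    apply inner_ball_path_point with (c2 := c2) (c := c) (d := d); auto.
    intro v. destruct (Hdiam v) as [dd [Hdd [_ Hub]]]. eauto.
  - intros n m w Hnm Hw. exists (Nat.iter (Z.to_nat (m - n)) d w); split.
    + rewrite (descendant_lev pi phi _ _ _ (iter_descendant d (fun v => proj1 (Hd v)) _ w)).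
      lia.
    + apply Hy_iter.
Qed.
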